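(* In any quiver, if $A$ is an ancestor of finite height of a normal vertex $B$, then both $A$ and $B$ are phylogenetic.
   Context: A quiver consists of a class of vertices and, for each ordered pair of vertices $(A,B)$, a set of edges $A\to B$ (loops and multiple edges allowed). An evolution of length $m\ge 0$ is a sequence $A_0\leftarrow A_1\leftarrow\cdots\leftarrow A_m$ of vertices together with edges $A_k\to A_{k-1}$ ($1\le k\le m$); $A_0$ is its initial and $A_m$ its terminal vertex. Write $A\le B$ ($A$ is an ancestor of $B$) if there is an evolution with initial vertex $A$ and terminal vertex $B$; $A,B$ are isotypic ($A\sim B$) if $A\le B$ and $B\le A$. A vertex $A$ is primitive if every ancestor of $A$ is isotypic to $A$. A full evolution for $X$ is an evolution with primitive initial vertex and terminal vertex $X$. The height $h(X)$ is the smallest length of a full evolution for $X$ ($\infty$ if none). A vertex $A_k$ ($0\le k<m$) of an evolution $A_0\leftarrow\cdots\leftarrow A_m$ is critical if $h(A_k)<\infty$ and $h(A_{k+1})=h(A_k)+1$. The critical ancestors of a vertex $B$ are the critical vertices of full evolutions terminating at $B$. $B$ is normal if any two critical ancestors of $B$ of equal height are isotypic. An evolution $\alpha=(A_0\leftarrow\cdots\leftarrow A_m)$ embeds in $\beta=(B_0\leftarrow\cdots\leftarrow B_n)$ if $m\le n$ and there are $0\le r_0<\cdots<r_m\le n$ with $A_k\sim B_{r_k}$. A universal evolution for $X$ is a full evolution for $X$ embedding in every full evolution for $X$; $X$ is phylogenetic if one exists. *)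

From Stdlib Require Import Arith.

Section Quiver.
Variable V : Type.
Variable E : V -> V -> Type.

(* An evolution of length m: vertices f 0, ..., f m (values of f beyond m are
   irrelevant) together with edges f (k+1) -> f k for k < m. *)
Definition is_evol (m : nat) (f : nat -> V) : Prop :=
  forall k, k < m -> inhabited (E (f (S k)) (f k)).

Definition ancestor (A B : V) : Prop :=
  exists m f, is_evol m f /\ f 0 = A /\ f m = B.

Definition isotypic (A B : V) : Prop := ancestor A B /\ ancestor B A.

Definition primitive (A : V) : Prop := forall C, ancestor C A -> isotypic C A.

Definition full_evol (X : V) (m : nat) (f : nat -> V) : Prop :=
  is_evol m f /\ primitive (f 0) /\ f m = X.

Definition height_is (X : V) (n : nat) : Prop :=
  (exists f, full_evol X n f) /\ forall m f, full_evol X m f -> n <= m.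

Definition finite_height (X : V) : Prop := exists n, height_is X n.

Definition critical (m : nat) (f : nat -> V) (k : nat) : Prop :=
  k < m /\ exists n, height_is (f k) n /\ height_is (f (S k)) (S n).

Definition critical_ancestor (B C : V) : Prop :=
  exists m f k, full_evol B m f /\ critical m f k /\ f k = C.

Definition normal (B : V) : Prop :=
  forall C D n, critical_ancestor B C -> critical_ancestor B D ->
    height_is C n -> height_is D n -> isotypic C D.

Definition embeds (m : nat) (f : nat -> V) (n : nat) (g : nat -> V) : Prop :=
  m <= n /\ exists r : nat -> nat,
    (forall k, k < m -> r k < r (S k)) /\ r m <= n /\
    (forall k, k <= m -> isotypic (f k) (g (r k))).

Definition universal (X : V) (m : nat) (f : nat -> V) : Prop :=
  full_evol X m f /\ forall n g, full_evol X n g -> embeds m f n g.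

Definition phylogenetic (X : V) : Prop := exists m f, universal X m f.

End Quiver.

(** Take a shortest full evolution [A_0 <- ... <- A_n] for the normal vertex;
    each [A_k] then has height [k].  Along any other full evolution for it the
    height starts at [0], ends at [n] and grows by at most one per step, so for
    every [k < n] the last vertex of height at most [k] has height exactly [k]
    and is followed by one of height [k + 1]: it is a critical ancestor of
    height [k], hence isotypic to [A_k] by normality.  These last crossings give
    the embedding.  Normality passes to ancestors and finite height to
    descendants, so both [A] and [B] are covered. *)
From Stdlib Require Import Arith Lia Wf_nat Classical IndefiniteDescription.

Lemma last_crossing (h : nat -> nat) (N n : nat) :
  h 0 = 0 -> h N = n -> (forall j, j < N -> h (S j) <= S (h j)) ->
  forall t, t < n -> exists j, j < N /\ h j = t /\ h (S j) = S t /\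
    forall j', j < j' -> j' <= N -> t < h j'.
Proof.
  revert n; induction N as [|N IH]; intros n h0 hN hstep t Ht.
  - lia.
  - destruct (Nat.lt_ge_cases t (h N)) as [Hlt|Hge].
    + destruct (IH (h N) h0 eq_refl (fun j Hj => hstep j ltac:(lia)) t Hlt)
        as (j & Hj & Hjt & HSj & Hafter).
      exists j; repeat split; try lia; auto.
      intros j' Hj' Hj'N.
      destruct (Nat.eq_dec j' (S N)) as [->|]; [lia | apply Hafter; lia].
    + specialize (hstep N (Nat.lt_succ_diag_r N)).
      exists N; repeat split; try lia.
      intros j' ? ?; replace j' with (S N) by lia; lia.
Qed.

Lemma crossing_indices (h : nat -> nat) (N n : nat) :
  h 0 = 0 -> h N = n -> (forall j, j < N -> h (S j) <= S (h j)) ->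
  exists r : nat -> nat,
    (forall t, t < n -> r t < r (S t)) /\ r n = N /\
    forall t, t < n -> r t < N /\ h (r t) = t /\ h (S (r t)) = S t.
Proof.
  intros h0 hN hstep.
  assert (Hcross : forall t, exists j, (t < n -> j < N /\ h j = t /\ h (S j) = S t /\
      forall j', j < j' -> j' <= N -> t < h j') /\ (n <= t -> j = N)).
  { intro t; destruct (Nat.lt_ge_cases t n) as [Ht|Ht].
    - destruct (last_crossing h N n h0 hN hstep t Ht) as [j Hj].
      exists j; split; [auto | lia].
    - exists N; split; [lia | auto]. }
  destruct (functional_choice _ Hcross) as [r Hr].
  exists r; split; [|split].
  - intros t Ht.
    destruct (proj1 (Hr t) Ht) as (Hrt & Hht & _).
    destruct (Nat.lt_ge_cases (S t) n) as [HSt|HSt].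
    + destruct (proj1 (Hr (S t)) HSt) as (_ & HhSt & _ & HafterSt).
      destruct (Nat.lt_ge_cases (r t) (r (S t))) as [|Hle]; [assumption|].
      destruct (Nat.eq_dec (r t) (r (S t))) as [Heq|Hne]; [rewrite Heq in Hht; lia|].
      specialize (HafterSt (r t) ltac:(lia) ltac:(lia)); lia.
    + rewrite (proj2 (Hr (S t)) HSt); assumption.
  - exact (proj2 (Hr n) (le_n n)).
  - intros t Ht; destruct (proj1 (Hr t) Ht) as (? & ? & ? & _); auto.
Qed.

Section Quiver.
Variable V : Type.
Variable E : V -> V -> Type.

Local Notation is_evol := (is_evol V E).
Local Notation ancestor := (ancestor V E).
Local Notation isotypic := (isotypic V E).
Local Notation primitive := (primitive V E).
Local Notation full_evol := (full_evol V E).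
Local Notation height_is := (height_is V E).
Local Notation critical_ancestor := (critical_ancestor V E).
Local Notation finite_height := (finite_height V E).
Local Notation normal := (normal V E).
Local Notation phylogenetic := (phylogenetic V E).

Lemma ancestor_refl (A : V) : ancestor A A.
Proof. exists 0, (fun _ => A); split; [intros k Hk; lia | split; reflexivity]. Qed.

Lemma isotypic_refl (A : V) : isotypic A A.
Proof. split; apply ancestor_refl. Qed.

Definition evol_cat (m : nat) (f g : nat -> V) (k : nat) : V :=
  if k <=? m then f k else g (k - m).

Lemma evol_cat_l m f g k : k <= m -> evol_cat m f g k = f k.
Proof. intro Hk; unfold evol_cat; destruct (Nat.leb_spec k m); [reflexivity | lia]. Qed.

Lemma evol_cat_r m f g k : f m = g 0 -> m <= k -> evol_cat m f g k = g (k - m).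
Proof.
  intros Hfg Hk; unfold evol_cat; destruct (Nat.leb_spec k m); [|reflexivity].
  replace k with m by lia; rewrite Nat.sub_diag; assumption.
Qed.

Lemma is_evol_cat m n f g : is_evol m f -> is_evol n g -> f m = g 0 ->
  is_evol (m + n) (evol_cat m f g).
Proof.
  intros Hf Hg Hfg k Hk.
  destruct (Nat.lt_ge_cases k m).
  - rewrite !evol_cat_l by lia; apply Hf; assumption.
  - rewrite !evol_cat_r by (auto; lia).
    replace (S k - m) with (S (k - m)) by lia; apply Hg; lia.
Qed.

Lemma is_evol_prefix m f j : is_evol m f -> j <= m -> is_evol j f.
Proof. intros Hf Hj k Hk; apply Hf; lia. Qed.

Lemma is_evol_suffix m f j : is_evol m f -> j <= m ->
  is_evol (m - j) (fun i => f (i + j)).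
Proof. intros Hf Hj k Hk; apply Hf; lia. Qed.

Lemma full_evol_cat X m f p g : full_evol X m f -> is_evol p g -> g 0 = X ->
  full_evol (g p) (m + p) (evol_cat m f g).
Proof.
  intros (Hf & Hprim & HfX) Hg Hg0; split; [|split].
  - apply is_evol_cat; [assumption | assumption | congruence].
  - rewrite evol_cat_l by lia; assumption.
  - rewrite evol_cat_r by (congruence || lia); f_equal; lia.
Qed.

Lemma full_evol_prefix X m f j : full_evol X m f -> j <= m -> full_evol (f j) j f.
Proof.
  intros (Hf & Hprim & _) Hj.
  split; [eapply is_evol_prefix; eassumption | split; [assumption | reflexivity]].
Qed.

Lemma height_unique X n n' : height_is X n -> height_is X n' -> n = n'.
Proof.
  intros [[f Hf] Hmin] [[f' Hf'] Hmin'].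
  specialize (Hmin _ _ Hf'); specialize (Hmin' _ _ Hf); lia.
Qed.

Lemma full_evol_finite_height X m f : full_evol X m f -> finite_height X.
Proof.
  intro Hf.
  destruct (dec_inh_nat_subset_has_unique_least_element
              (fun n => exists f, full_evol X n f) (fun n => classic _)
              (ex_intro _ m (ex_intro _ f Hf))) as (n & [Hn Hleast] & _).
  exists n; split; [exact Hn|].
  intros m' f' Hf'; apply Hleast; eauto.
Qed.

Lemma height_primitive X : primitive X -> height_is X 0.
Proof.
  intro Hprim; split; [|intros; lia].
  exists (fun _ => X); split; [intros k Hk; lia | split; [assumption | reflexivity]].
Qed.

Lemma finite_height_ancestor A B : finite_height A -> ancestor A B -> finite_height B.
Proof.
  intros [a [[f Hf] _]] (p & g & Hg & Hg0 & HgB); subst B.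
  exact (full_evol_finite_height _ _ _ (full_evol_cat _ _ _ _ _ Hf Hg Hg0)).
Qed.

Lemma heights_along X N g : full_evol X N g ->
  exists h : nat -> nat, forall j, j <= N -> height_is (g j) (h j).
Proof.
  intro Hg; apply functional_choice with (R := fun j a => j <= N -> height_is (g j) a).
  intro j; destruct (Nat.le_gt_cases j N) as [Hj|Hj].
  - destruct (full_evol_finite_height _ _ _ (full_evol_prefix _ _ _ _ Hg Hj)) as [a Ha].
    exists a; auto.
  - exists 0; lia.
Qed.

Lemma height_edge_le X Y a b : height_is X a -> inhabited (E Y X) ->
  height_is Y b -> b <= S a.
Proof.
  intros [[f Hf] _] HYX [_ Hmin].
  set (g := fun i => match i with 0 => X | _ => Y end).
  assert (Hg : is_evol 1 g) by (intros [|k] Hk; [exact HYX | lia]).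
  specialize (Hmin _ _ (full_evol_cat _ _ _ _ _ Hf Hg eq_refl)); lia.
Qed.

Lemma height_shortest X n f : height_is X n -> full_evol X n f ->
  forall k, k <= n -> height_is (f k) k.
Proof.
  intros [_ Hmin] Hf k Hk; split.
  - exists f; exact (full_evol_prefix _ _ _ _ Hf Hk).
  - intros m g Hg.
    destruct Hf as (Hf & Hprim & HfX).
    pose proof (full_evol_cat _ _ _ _ _ Hg (is_evol_suffix _ _ _ Hf Hk) eq_refl) as Hgf.
    cbv beta in Hgf; rewrite Nat.sub_add, HfX in Hgf by assumption.
    specialize (Hmin _ _ Hgf); lia.
Qed.

Lemma critical_ancestor_of_full_evol X m f k t : full_evol X m f -> k < m ->
  height_is (f k) t -> height_is (f (S k)) (S t) -> critical_ancestor X (f k).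
Proof.
  intros Hf Hk Ht HSt; exists m, f, k.
  split; [exact Hf | split; [split; [exact Hk | eauto] | reflexivity]].
Qed.

Lemma critical_ancestor_trans A B C : ancestor A B ->
  critical_ancestor A C -> critical_ancestor B C.
Proof.
  intros (p & g & Hg & Hg0 & HgB) (m & f & k & Hf & [Hk Hcrit] & Hfk).
  pose proof (full_evol_cat _ _ _ _ _ Hf Hg Hg0) as Hfg; rewrite HgB in Hfg.
  exists (m + p), (evol_cat m f g), k; split; [exact Hfg|].
  split; [split; [lia|] |]; rewrite !evol_cat_l by lia; assumption.
Qed.

Lemma normal_ancestor A B : normal B -> ancestor A B -> normal A.
Proof.
  intros HB HAB C D n HC HD; apply HB; eapply critical_ancestor_trans; eassumption.
Qed.

Lemma normal_phylogenetic X : normal X -> finite_height X -> phylogenetic X.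
Proof.
  intros Hnorm [n Hn].
  destruct (proj1 Hn) as [f Hf].
  exists n, f; split; [exact Hf|].
  intros N g Hg; split; [exact (proj2 Hn _ _ Hg)|].
  destruct (heights_along _ _ _ Hg) as [h Hh].
  pose proof Hg as (Hge & Hgprim & HgX).
  assert (h0 : h 0 = 0).
  { apply (height_unique (g 0)); [apply Hh; lia | apply height_primitive; assumption]. }
  assert (hN : h N = n) by (apply (height_unique X); [rewrite <- HgX; apply Hh|]; auto).
  assert (hstep : forall j, j < N -> h (S j) <= S (h j)).
  { intros j Hj; apply (height_edge_le (g j) (g (S j))); auto; apply Hh; lia. }
  destruct (crossing_indices h N n h0 hN hstep) as (r & Hr_incr & HrN & Hr).
  exists r; split; [exact Hr_incr | split; [lia|]].
  intros k Hk; destruct (Nat.lt_ge_cases k n) as [Hkn|Hkn].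
  - destruct (Hr k Hkn) as (HrkN & Hhk & HhSk).
    pose proof (Hh (r k) ltac:(lia)) as Hgk; rewrite Hhk in Hgk.
    pose proof (Hh (S (r k)) HrkN) as HgSk; rewrite HhSk in HgSk.
    apply (Hnorm _ _ k); [| | apply (height_shortest X n); auto | exact Hgk].
    + apply (critical_ancestor_of_full_evol _ n f k k Hf Hkn);
        apply (height_shortest X n); auto; lia.
    + exact (critical_ancestor_of_full_evol _ N g (r k) k Hg HrkN Hgk HgSk).
  - replace k with n by lia; rewrite HrN, HgX, (proj2 (proj2 Hf)).
    apply isotypic_refl.
Qed.

End Quiver.

Theorem corollary5p2 (V : Type) (E : V -> V -> Type) (A B : V) :
  normal V E B -> ancestor V E A B -> finite_height V E A ->
  phylogenetic V E A /\ phylogenetic V E B.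
Proof.
  intros HB HAB HA; split.
  - exact (normal_phylogenetic V E A (normal_ancestor V E A B HB HAB) HA).
  - exact (normal_phylogenetic V E B HB (finite_height_ancestor V E A B HA HAB)).
Qed.
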